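(* Let $H$ be a fixed graph, $\eta>0$ fixed, and $p=p(n)$. Suppose $n^{v(J)}p^{e(J)}=\omega(1)$ for every induced subgraph $J\subseteq H$ with at least one edge. Let $\mathcal C\subseteq\binom{[n]}{v(H)}$ be a family (depending on $n$, fixed independently of the random graph) with $|\mathcal C|\ge\eta\binom{n}{v(H)}$. Then asymptotically almost surely $\mathbb{G}(n,p)$ contains a copy of $H$ whose vertex set belongs to $\mathcal C$.
   Context: $\mathbb{G}(n,p)$ is the binomial random graph on vertex set $[n]$. *)

From HB Require Import structures.
From mathcomp Require Import all_boot all_order all_algebra.
From mathcomp Require Import all_classical all_reals all_analysis.
Set Implicit Arguments. Unset Strict Implicit. Unset Printing Implicit Defensive.
Import Order.TTheory GRing.Theory Num.Theory.
Local Open Scope ring_scope.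

(* Graphs on vertex set 'I_n are represented by their edge sets: sets of
   2-element subsets of 'I_n. *)
Definition pairs (n : nat) : {set {set 'I_n}} := [set e : {set 'I_n} | #|e| == 2%N].

Definition is_graph (h : nat) (EH : {set {set 'I_h}}) : Prop := EH \subset pairs h.

Definition induced_edges (h : nat) (EH : {set {set 'I_h}}) (S : {set 'I_h}) : nat :=
  #|[set e in EH | e \subset S]|.

Definition gnp_prob (R : realType) (n : nat) (p : R) (A : pred {set {set 'I_n}}) : R :=
  \sum_(E in powerset (pairs n) | A E) p ^+ #|E| * (1 - p) ^+ (#|pairs n| - #|E|).

Definition has_copy_in (h n : nat) (EH : {set {set 'I_h}}) (C : {set {set 'I_n}})
  (E : {set {set 'I_n}}) : bool :=
  [exists f : {ffun 'I_h -> 'I_n},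
     [&& injectiveb f, [forall e in EH, (f @: e) \in E] & (f @: [set: 'I_h]) \in C]].

Set Implicit Arguments. Unset Strict Implicit. Unset Printing Implicit Defensive.
From HB Require Import structures.
From mathcomp Require Import all_boot all_order all_algebra.
From mathcomp Require Import all_classical all_reals all_analysis.
From mathcomp Require Import ring zify.
Import Order.TTheory GRing.Theory Num.Theory.
Import numFieldNormedType.Exports.
Local Open Scope ring_scope.
(* The finset lemmas (subsetP, setP, ...) must take precedence over their
   classical_sets homonyms. *)
Import mathcomp.boot.fintype mathcomp.boot.finset.

(* Proof by the second moment method.
   Let X count the embeddings f : [h] -> [n] with image in C whose copy of H
   is present in G(n,p); X = 0 whenever G has no such copy, so by Chebyshev
   P(no copy) <= Var X / (E X)^2.  With q = p^e(H) and N the number of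
   embeddings, E X = N q, and the covariance of two copies f, g is
   p^|A_f u A_g| - q^2, which vanishes unless they share an edge; in that case
   it is at most q^2 / (n^|S| p^e(H[S])) * n^|S| <= q^2 M n^|S| where S is the
   shared vertex set and 1/M bounds every n^v(J) p^e(J) from below.  Summing,
   Var X <= N q^2 M ((h+1) n)^h, hence P(no copy) <= M ((h+1) n)^h / N, and
   N >= |C| >= eta C(n,h) >= eta n^h / (2^h h!).  Taking M = sum_J 1/(n^v(J)
   p^e(J)), which tends to 0 by hypothesis, finishes the proof. *)

(* The random subset of a finite ground set P in which every element is kept
   independently with probability p; G(n,p) is the case P = pairs n. *)
Section RandomSubset.
Variables (R : realType) (T : finType) (P : {set T}) (p : R).

Definition weight (E : {set T}) : R := p ^+ #|E| * (1 - p) ^+ (#|P| - #|E|).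

Definition expect (g : {set T} -> R) : R :=
  \sum_(E in powerset P) weight E * g E.

Lemma prod_indicator (J : {set T}) (a : R) :
  \prod_i (if i \in J then a else 1) = a ^+ #|J|.
Proof. by rewrite -big_mkcond prodr_const. Qed.

Lemma prod_indicator2 (J K : {set T}) (a b : R) : [disjoint J & K] ->
  \prod_i (if i \in J then a else if i \in K then b else 1) = a ^+ #|J| * b ^+ #|K|.
Proof.
move=> dJK; rewrite -!prod_indicator -big_split /=; apply: eq_bigr => i _.
case: (boolP (i \in J)) => iJ; last by rewrite mul1r.
by rewrite (disjointFr dJK iJ) mulr1.
Qed.

(* Expanding the product
   \prod_i (p [i in P] + (1 - p) [i in P \ B] + [i notin P]) over subsets J of T,
   the only nonzero terms are those with B \subset J \subset P, and they are
   exactly the weights of such J. *)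
Lemma sum_weight_superset (B : {set T}) : B \subset P ->
  \sum_(E in powerset P | B \subset E) weight E = p ^+ #|B|.
Proof.
move=> sBP.
have := @bigA_distr R 0 1 *%R +%R T (fun i => if i \in P then p else 0)
   (fun i => if i \in B then 0 else if i \in P then 1 - p else 1).
have -> : \prod_i ((if i \in P then p else 0) +
   (if i \in B then 0 else if i \in P then 1 - p else 1)) = p ^+ #|B|.
  rewrite -prod_indicator; apply: eq_bigr => i _.
  case: (boolP (i \in B)) => iB; first by rewrite (subsetP sBP _ iB) addr0.
  by case: (i \in P); rewrite ?add0r // addrC subrK.
move=> ->; rewrite big_mkcond /=; apply: eq_bigr => J _.
rewrite powersetE; case: (boolP (J \subset P)) => sJP /=; last first.
  have [i iJ iP] : exists2 i, i \in J & i \notin P.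
    by case/subsetPn: sJP => i ? ?; exists i.
  by rewrite (bigD1 i) //= iJ (negbTE iP) mul0r.
case: (boolP (B \subset J)) => sBJ /=; last first.
  have [i iB iJ] : exists2 i, i \in B & i \notin J.
    by case/subsetPn: sBJ => i ? ?; exists i.
  by rewrite (bigD1 i) //= (negbTE iJ) iB mul0r.
have cardPJ : (#|P| - #|J| = #|P :\: J|)%N by rewrite cardsD (setIidPr sJP).
have dJPJ : [disjoint J & P :\: J].
  by rewrite disjoint_subset; apply/subsetP => i iJ; rewrite !inE iJ.
rewrite /weight cardPJ -prod_indicator2 //; apply: eq_bigr => i _.
case: (boolP (i \in J)) => iJ; first by rewrite (subsetP sJP _ iJ).
by rewrite inE iJ /= (contraNF (subsetP sBJ i) iJ).
Qed.

Lemma expect_superset (B : {set T}) : B \subset P ->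
  expect (fun E => (B \subset E)%:R) = p ^+ #|B|.
Proof.
move=> sB; rewrite -(sum_weight_superset sB) big_mkcondr /=.
by apply: eq_bigr => E _; case: (B \subset E); rewrite ?mulr1 ?mulr0.
Qed.

Lemma sum_weight : \sum_(E in powerset P) weight E = 1.
Proof.
rewrite -(expr0 p) -(cards0 T) -(sum_weight_superset (sub0set P)).
by apply: eq_bigl => E; rewrite sub0set andbT.
Qed.

Lemma expect1 : expect (fun _ => 1) = 1.
Proof. by rewrite -[RHS]sum_weight; apply: eq_bigr => E _; rewrite mulr1. Qed.

Lemma eq_expect (a b : {set T} -> R) : a =1 b -> expect a = expect b.
Proof. by move=> eab; apply: eq_bigr => E _; rewrite eab. Qed.

Lemma expectD (a b : {set T} -> R) :
  expect (fun E => a E + b E) = expect a + expect b.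
Proof. by rewrite /expect -big_split; apply: eq_bigr => E _; rewrite mulrDr. Qed.

Lemma expectZ (c : R) (a : {set T} -> R) :
  expect (fun E => c * a E) = c * expect a.
Proof. by rewrite /expect mulr_sumr; apply: eq_bigr => E _; rewrite mulrCA. Qed.

Lemma expect_sum (I : finType) (Q : pred I) (a : I -> {set T} -> R) :
  expect (fun E => \sum_(i | Q i) a i E) = \sum_(i | Q i) expect (a i).
Proof.
rewrite /expect; under eq_bigr => E _ do rewrite mulr_sumr.
by rewrite exchange_big.
Qed.

Lemma prob_compl (A : pred {set T}) :
  \sum_(E in powerset P | A E) weight E =
  1 - \sum_(E in powerset P | ~~ A E) weight E.
Proof.
have total := sum_weight; rewrite (bigID A) /= in total.
by apply/eqP; rewrite eq_sym subr_eq total.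
Qed.

Hypothesis p01 : 0 <= p <= 1.

Lemma weight_ge0 (E : {set T}) : 0 <= weight E.
Proof. by case/andP: p01 => p0 p1; rewrite mulr_ge0 ?exprn_ge0 // subr_ge0. Qed.

Lemma second_moment (A : pred {set T}) (g : {set T} -> R) (mu : R) :
  0 < mu -> (forall E, A E -> g E = 0) ->
  \sum_(E in powerset P | A E) weight E <= expect (fun E => (g E - mu) ^+ 2) / mu ^+ 2.
Proof.
move=> mu0 gA; rewrite /expect big_mkcondr /= mulr_suml; apply: ler_sum => E _.
rewrite -mulrA; case: (boolP (A E)) => AE.
  by rewrite gA // sub0r sqrrN divff ?mulr1 // expf_neq0 // gt_eqF.
by rewrite mulr_ge0 ?weight_ge0 // divr_ge0 ?sqr_ge0 // exprn_ge0 // ltW.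
Qed.

End RandomSubset.

Section Copies.
Variables (R : realType) (h n : nat) (EH : {set {set 'I_h}}) (C : {set {set 'I_n}}).
Variable p : R.
Hypothesis graphH : is_graph EH.
Hypothesis p01 : 0 <= p <= 1.

Local Notation Ex := (expect (pairs n) p).
Local Notation func := {ffun 'I_h -> 'I_n}.

Definition copy_edges (f : func) : {set {set 'I_n}} := [set f @: e | e : {set 'I_h} in EH].

Definition embeddings : {set func} :=
  [set f : func | injectiveb f && (f @: setT \in C)].

Definition copy_ind (f : func) (E : {set {set 'I_n}}) : R := (copy_edges f \subset E)%:R.

Definition copy_count (E : {set {set 'I_n}}) : R := \sum_(f in embeddings) copy_ind f E.

Definition copy_prob : R := p ^+ #|EH|.

Definition overlap (f g : func) : nat := #|[set j | g j \in f @: setT]|.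

Lemma embedding_inj (f : func) : f \in embeddings -> injective f.
Proof. by rewrite inE => /andP [/injectiveP]. Qed.

Lemma copy_edges_pairs (f : func) : injective f -> copy_edges f \subset pairs n.
Proof.
move=> injf; apply/subsetP => a /imsetP [e eE ->].
by rewrite inE card_imset //; have := subsetP graphH _ eE; rewrite inE.
Qed.

Lemma card_copy_edges (f : func) : injective f -> #|copy_edges f| = #|EH|.
Proof. by move=> injf; rewrite card_imset //; apply: imset_inj. Qed.

Lemma expect_copy_ind (f : func) : injective f -> Ex (copy_ind f) = copy_prob.
Proof.
by move=> injf; rewrite expect_superset ?copy_edges_pairs // card_copy_edges.
Qed.

(* Covariance of two copy indicators: both copies are present iff the union of
   their edge sets is. *)
Lemma cov_copy_ind (f g : func) : injective f -> injective g ->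
  Ex (fun E => (copy_ind f E - copy_prob) * (copy_ind g E - copy_prob)) =
  p ^+ #|copy_edges f :|: copy_edges g| - copy_prob ^+ 2.
Proof.
move=> injf injg; set q := copy_prob.
rewrite (@eq_expect _ _ _ _ _ (fun E => ((copy_edges f :|: copy_edges g) \subset E)%:R
   + ((- q) * copy_ind g E + ((- q) * copy_ind f E + q ^+ 2 * 1)))); last first.
  move=> E; rewrite subUset.
  have -> : ((copy_edges f \subset E) && (copy_edges g \subset E))%:R =
      copy_ind f E * copy_ind g E :> R by rewrite /copy_ind -natrM mulnb.
  by move: (copy_ind f E) (copy_ind g E) q => x y z; ring.
rewrite !expectD !expectZ !expect_copy_ind // expect1 expect_superset; last first.
  by rewrite subUset !copy_edges_pairs.
by rewrite mulr1 mulNr -expr2 addNr addr0.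
Qed.

Lemma shared_edges_le (f g : func) : injective f ->
  (#|copy_edges f :&: copy_edges g| <= induced_edges EH (f @^-1: (g @: setT)))%N.
Proof.
move=> injf; rewrite /induced_edges.
apply: (leq_trans _ (leq_imset_card (fun e : {set 'I_h} => f @: e) _)).
apply: subset_leq_card; apply/subsetP => a; rewrite inE => /andP [].
move=> /imsetP [e eE ->] /imsetP [e' e'E fe_ge'].
apply/imsetP; exists e => //; rewrite inE eE /=.
apply/subsetP => x xe; rewrite inE.
have : f x \in f @: e by apply: imset_f.
by rewrite fe_ge' => /imsetP [y _ ->]; apply: imset_f.
Qed.

Lemma card_shared_vertices (f g : func) : injective f ->
  (#|f @^-1: (g @: setT)| <= overlap f g)%N.
Proof.
move=> injf; rewrite -(card_imset _ injf) /overlap.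
apply: (leq_trans _ (leq_imset_card g _)); apply: subset_leq_card.
apply/subsetP => y /imsetP [x]; rewrite inE => /imsetP [j _ fx_gj] ->.
by rewrite fx_gj; apply: imset_f; rewrite inE -fx_gj; apply: imset_f.
Qed.


(* For a fixed copy f, the overlaps with all maps g sum up to
   \sum_g n^(overlap f g) = \prod_j (h n + (n - h)) <= ((h + 1) n)^h. *)
Lemma sum_pow_overlap (f : func) :
  (\sum_(g : func) n ^ overlap f g <= (h.+1 * n) ^ h)%N.
Proof.
set A := f @: setT.
have overlapE : forall g : func,
    (n ^ overlap f g = \prod_j (if g j \in A then n else 1))%N.
  move=> g; rewrite /overlap -prod_nat_const big_mkcond /=.
  by apply: eq_bigr => j _; rewrite inE.
rewrite (eq_bigr _ (fun g _ => overlapE g)).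
rewrite -(bigA_distr_bigA (fun (j : 'I_h) (x : 'I_n) => if x \in A then n else 1%N)) /=.
have -> : ((h.+1 * n) ^ h = \prod_(j : 'I_h) (h.+1 * n))%N.
  by rewrite prod_nat_const card_ord.
apply: leq_prod => j _.
rewrite (bigID (mem A)) /= (eq_bigr (fun _ => n)); last by move=> x ->.
rewrite [X in (_ + X)%N](eq_bigr (fun _ => 1%N)); last by move=> x /negbTE ->.
rewrite !sum_nat_const muln1 mulSn addnC; apply: leq_add.
  by apply: (leq_trans (max_card _)); rewrite card_ord.
by rewrite leq_mul2r (leq_trans (leq_imset_card _ _)) ?orbT // cardsT card_ord.
Qed.

Lemma copy_count_eq0 (E : {set {set 'I_n}}) : ~~ has_copy_in EH C E -> copy_count E = 0.
Proof.
move=> noCopy; apply: big1 => f fF; rewrite /copy_ind.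
case: (boolP (copy_edges f \subset E)) => // sE; case/negP: noCopy.
apply/existsP; exists f; move: fF; rewrite inE => /andP [-> ->]; rewrite andbT /=.
by apply/forall_inP => e eE; apply: (subsetP sE); apply: imset_f.
Qed.

Lemma variance_copy_count :
  Ex (fun E => (copy_count E - #|embeddings|%:R * copy_prob) ^+ 2) =
  \sum_(f in embeddings) \sum_(g in embeddings)
     (p ^+ #|copy_edges f :|: copy_edges g| - copy_prob ^+ 2).
Proof.
rewrite (@eq_expect _ _ _ _ _ (fun E => \sum_(f in embeddings) \sum_(g in embeddings)
    (copy_ind f E - copy_prob) * (copy_ind g E - copy_prob))); last first.
  move=> E; have -> : #|embeddings|%:R * copy_prob = \sum_(f in embeddings) copy_prob.
    by rewrite sumr_const mulr_natl.
  rewrite /copy_count -sumrB expr2 mulr_suml.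
  by apply: eq_bigr => f _; rewrite mulr_sumr.
rewrite expect_sum; apply: eq_bigr => f fF.
rewrite expect_sum; apply: eq_bigr => g gF.
exact: cov_copy_ind (embedding_inj fF) (embedding_inj gF).
Qed.

Section CovarianceBound.
Variable M : R.
Hypothesis M_ge0 : 0 <= M.
Hypothesis n_ge1 : 1 <= n%:R :> R.
Hypothesis subgraph_mean :
  forall S : {set 'I_h}, (0 < induced_edges EH S)%N ->
    1 <= n%:R ^+ #|S| * p ^+ induced_edges EH S * M.

(* Covariance bound: if the copies f and g share an edge, they overlap in a set
   S spanning at least one edge, and p^|A f \cup A g| = q^2 p^-|A f \cap A g|
   is at most q^2 p^-e(H[S]) <= q^2 M n^|S|. *)
Lemma cov_copy_ind_le (f g : func) : injective f -> injective g ->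
  p ^+ #|copy_edges f :|: copy_edges g| - copy_prob ^+ 2 <=
  copy_prob ^+ 2 * M * n%:R ^+ overlap f g.
Proof.
move=> injf injg; case/andP: p01 => p0 p1; set q := copy_prob.
set U := copy_edges f :|: copy_edges g; set I := copy_edges f :&: copy_edges g.
have q2_ge0 : 0 <= q ^+ 2 by rewrite !exprn_ge0.
have q2_split : q ^+ 2 = p ^+ #|U| * p ^+ #|I|.
  rewrite /q /copy_prob -exprD -exprM; congr (_ ^+ _).
  by rewrite cardsUI !card_copy_edges // addnn muln2.
case: (posnP #|I|) => [I0 | I_gt0].
  rewrite q2_split I0 mulr1 subrr.
  by rewrite !mulr_ge0 ?exprn_ge0 // ler0n.
set S := f @^-1: (g @: setT).
have eS := shared_edges_le g injf; have vS := card_shared_vertices g injf.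
have MS := subgraph_mean (leq_trans I_gt0 eS).
suff pU : p ^+ #|U| <= q ^+ 2 * M * n%:R ^+ overlap f g.
  by rewrite lerBlDr (le_trans pU) // lerDl.
apply: (le_trans (y := p ^+ #|U| * (n%:R ^+ #|S| * p ^+ induced_edges EH S * M))).
  by rewrite -{1}[p ^+ _]mulr1 ler_wpM2l ?exprn_ge0.
rewrite q2_split -!mulrA ler_wpM2l ?exprn_ge0 // [M * _]mulrC mulrCA.
have nS : n%:R ^+ #|S| <= n%:R ^+ overlap f g :> R := ler_weXn2l n_ge1 vS.
have pS : p ^+ induced_edges EH S <= p ^+ #|I| := ler_wiXn2l p0 p1 eS.
apply: ler_pM; rewrite ?mulr_ge0 ?exprn_ge0 ?(le_trans ler01 n_ge1) //.
exact: ler_wpM2r.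
Qed.


(* Hence q = p^e(H) > 0, since H itself is a subgraph spanning every edge. *)
Lemma copy_prob_gt0 : 0 < copy_prob.
Proof.
rewrite /copy_prob; case: (posnP #|EH|) => [-> | EH_gt0]; first exact: ltr01.
have allH : induced_edges EH setT = #|EH|.
  rewrite /induced_edges (_ : [set e in EH | e \subset setT] = EH) //.
  by apply/setP => e; rewrite inE subsetT andbT.
have := subgraph_mean (S := setT); rewrite allH => /(_ EH_gt0) meanH.
rewrite lt_def exprn_ge0 ?andbT; last by case/andP: p01.
by apply: contraTneq meanH => ->; rewrite mulr0 mul0r ler10.
Qed.

Lemma variance_copy_count_le :
  Ex (fun E => (copy_count E - #|embeddings|%:R * copy_prob) ^+ 2) <=
  #|embeddings|%:R * (copy_prob ^+ 2 * M * ((h.+1 * n) ^ h)%:R).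
Proof.
rewrite variance_copy_count mulr_natl -sumr_const; apply: ler_sum => f fF.
have qM_ge0 : 0 <= copy_prob ^+ 2 * M by rewrite mulr_ge0 // exprn_ge0 // ltW // copy_prob_gt0.
apply: (le_trans (y := \sum_(g in embeddings) copy_prob ^+ 2 * M * n%:R ^+ overlap f g)).
  by apply: ler_sum => g gF; apply: cov_copy_ind_le; apply: embedding_inj.
apply: (le_trans (y := \sum_g copy_prob ^+ 2 * M * n%:R ^+ overlap f g)).
  rewrite [X in _ <= X](bigID (mem embeddings)) /= lerDl.
  by apply: sumr_ge0 => g _; rewrite mulr_ge0 // exprn_ge0.
rewrite -mulr_sumr ler_wpM2l //.
under eq_bigr do rewrite -natrX.
by rewrite -natr_sum ler_nat sum_pow_overlap.
Qed.

Lemma no_copy_prob_le : (0 < #|embeddings|)%N ->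
  @gnp_prob R n p (fun E => ~~ has_copy_in EH C E) <=
    M * ((h.+1 * n) ^ h)%:R / #|embeddings|%:R.
Proof.
move=> F_gt0; have q_gt0 := copy_prob_gt0.
set mu := #|embeddings|%:R * copy_prob.
have mu_gt0 : 0 < mu by rewrite mulr_gt0 // ltr0n.
apply: (le_trans (second_moment (pairs n) p01 mu_gt0 (@copy_count_eq0))).
apply: (le_trans (ler_wpM2r _ variance_copy_count_le)).
  by rewrite invr_ge0 exprn_ge0 // ltW.
rewrite le_eqVlt; apply/orP; left; apply/eqP; rewrite /mu.
have Fn0 : #|embeddings|%:R != 0 :> R by rewrite pnatr_eq0 -lt0n.
move: (#|embeddings|%:R : R) copy_prob (_%:R : R) Fn0 (gt_eqF q_gt0) => a b c an0 bn0.
by field; rewrite an0 bn0.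
Qed.

End CovarianceBound.

(* Every c in C is the image of some embedding, so there are at least |C|. *)
Lemma card_embeddings : (forall c, c \in C -> #|c| = h) -> (#|C| <= #|embeddings|)%N.
Proof.
move=> cardC.
apply: (leq_trans _ (leq_imset_card (fun f : func => f @: setT) embeddings)).
apply: subset_leq_card; apply/subsetP => c cC.
have hc := cardC c cC.
pose f : func := [ffun j => enum_val (cast_ord (esym hc) j)].
have imf : f @: setT = c.
  apply/setP => x; apply/imsetP/idP; first by case=> j _ ->; rewrite ffunE enum_valP.
  move=> xc; exists (cast_ord hc (enum_rank_in xc x)) => //.
  by rewrite ffunE cast_ordK enum_rankK_in.
apply/imsetP; exists f => //; rewrite inE imf cC andbT.
by apply/injectiveP => i j; rewrite !ffunE => /enum_val_inj /cast_ord_inj.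
Qed.

End Copies.

(* Each of the m factors of the falling factorial n^_m is at least n + 1 - m. *)
Lemma ffact_ge (m n : nat) : ((n.+1 - m) ^ m <= n ^_ m)%N.
Proof.
elim: m n => [|m IH] [|n] //; first by rewrite subSS sub0n exp0n.
by rewrite ffactSS subSS expnS leq_mul ?leq_subr.
Qed.

(* For n >= 2k, n^k <= 2^k k! C(n, k): each factor n - i of the falling
   factorial n^_k is at least n / 2. *)
Lemma pow_le_binomial (n k : nat) : (2 * k <= n)%N -> (n ^ k <= 2 ^ k * k`! * 'C(n, k))%N.
Proof.
move=> k_le; rewrite -mulnA [(k`! * _)%N]mulnC bin_ffact.
apply: (leq_trans _ (leq_mul (leqnn _) (ffact_ge k n))).
rewrite -expnMn; case: k k_le => [|k] k_le; first by rewrite !expn0.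
by rewrite leq_exp2r //; lia.
Qed.

Lemma no_copy_prob_binomial (R : realType) (h n : nat) (EH : {set {set 'I_h}})
    (C : {set {set 'I_n}}) (p eta M : R) :
  is_graph EH -> 0 <= p <= 1 -> 0 < eta -> 0 <= M -> (2 * h < n)%N ->
  (forall S : {set 'I_h}, (0 < induced_edges EH S)%N ->
     1 <= n%:R ^+ #|S| * p ^+ induced_edges EH S * M) ->
  (forall c, c \in C -> #|c| = h) -> eta * ('C(n, h))%:R <= (#|C|)%:R ->
  @gnp_prob R n p (fun E => ~~ has_copy_in EH C E) <=
    M * ((h.+1 ^ h * (2 ^ h * h`!))%:R / eta).
Proof.
move=> graphH p01 eta_gt0 M_ge0 n_gt subgraph_mean cardC bigC.
have n_ge1 : 1 <= n%:R :> R by rewrite ler1n; apply: leq_ltn_trans n_gt.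
have binom_gt0 : (0 < 'C(n, h))%N by rewrite bin_gt0; lia.
have bigF : eta * ('C(n, h))%:R <= #|embeddings h C|%:R.
  by apply: (le_trans bigC); rewrite ler_nat card_embeddings.
have F_gt0 : (0 < #|embeddings h C|)%N.
  by rewrite -(ltr0n R); apply: lt_le_trans bigF; rewrite mulr_gt0 // ltr0n.
apply: (le_trans (no_copy_prob_le graphH p01 M_ge0 n_ge1 subgraph_mean F_gt0)).
rewrite -mulrA ler_wpM2l // ler_pdivrMr ?ltr0n //.
set c := (h.+1 ^ h * (2 ^ h * h`!))%N.
apply: (le_trans (y := c%:R / eta * (eta * ('C(n, h))%:R))); last first.
  by rewrite ler_wpM2l // divr_ge0 ?ler0n ?ltW.
rewrite mulrA divfK ?gt_eqF // -natrM ler_nat expnMn /c -mulnA leq_mul2l.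
by rewrite pow_le_binomial ?orbT //; apply: ltnW.
Qed.

Lemma le1_mul_sum_inv (R : realFieldType) (I : finType) (P : pred I) (x : I -> R) (i : I) :
  (forall j, P j -> 0 < x j) -> P i -> 1 <= x i * \sum_(j | P j) (x j)^-1.
Proof.
move=> x_gt0 Pi; rewrite -(mulfV (lt0r_neq0 (x_gt0 i Pi))).
rewrite ler_pM2l ?x_gt0 // (bigD1 i) //= lerDl.
by apply: sumr_ge0 => j /andP [Pj _]; rewrite invr_ge0 ltW ?x_gt0.
Qed.

Local Open Scope classical_set_scope.

Lemma inv_cvg0 (R : realType) (x : nat -> R) :
  x @ \oo --> +oo -> (fun n => (x n)^-1) @ \oo --> (0 : R).
Proof.
move=> x_oo; have x_gt0 : \forall n \near \oo, 0 < x n by move/cvgryPgt: x_oo; apply.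
apply/(cvgrVy (f := fun n => (x n)^-1)); first by near=> n; rewrite invr_gt0; near: n.
suff -> : unstable.inv_fun (fun n : nat => (x n)^-1) = x by [].
by apply: boolp.funext => n; rewrite /unstable.inv_fun invrK.
Unshelve. all: end_near.
Qed.

Lemma sum_cvg0 (R : realType) (I : finType) (P : pred I) (x : I -> nat -> R) :
  (forall i, P i -> x i @ \oo --> (0 : R)) ->
  (fun n => \sum_(i | P i) x i n) @ \oo --> (0 : R).
Proof.
move=> x_cvg0.
have := @cvg_big R I +%R 0 P add_continuous nat \oo (index_enum I) x (fun=> 0) _ x_cvg0.
by rewrite big1 // => H; apply: H; apply: filter_class.
Qed.

Lemma eventually_all_gt0 (R : realType) (I : finType) (P : pred I) (x : I -> nat -> R) :
  (forall i, P i -> x i @ \oo --> +oo) -> \forall n \near \oo, forall i, P i -> 0 < x i n.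
Proof.
move=> x_oo; apply: filter_forall => i; case: (boolP (P i)) => [Pi | _].
  by move/cvgryPgt: (x_oo i Pi) => /(_ 0); apply: filterS.
by apply: nearW.
Qed.

Local Open Scope ring_scope.

Theorem corollaryA2 (R : realType) (h : nat) (EH : {set {set 'I_h}})
  (eta : R) (p : nat -> R) (C : forall n : nat, {set {set 'I_n}}) :
  is_graph EH ->
  0 < eta ->
  (forall n, 0 <= p n <= 1) ->
  (forall S : {set 'I_h}, (0 < induced_edges EH S)%N ->
     (fun n : nat => (n%:R : R) ^+ #|S| * p n ^+ induced_edges EH S) @ \oo --> +oo) ->
  (forall n, forall c, c \in C n -> #|c| = h) ->
  (forall n, eta * ('C(n, h))%:R <= (#|C n|)%:R) ->
  (fun n : nat => @gnp_prob R n (p n) (has_copy_in EH (C n))) @ \oo --> (1 : R).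
Proof.
move=> graphH eta_gt0 p01 dense cardC bigC.
have -> : (fun n => @gnp_prob R n (p n) (has_copy_in EH (C n))) =
    (fun n => 1 - @gnp_prob R n (p n) (fun E => ~~ has_copy_in EH (C n) E)).
  by apply: boolp.funext => n; rewrite /gnp_prob prob_compl.
rewrite -[X in _ --> X]subr0; apply: cvgB; first exact: cvg_cst.
set x := fun (S : {set 'I_h}) (n : nat) => (n%:R : R) ^+ #|S| * p n ^+ induced_edges EH S.
set M := fun n => \sum_(S | (0 < induced_edges EH S)%N) (x S n)^-1.
have M_cvg0 : M @ \oo --> (0 : R) := sum_cvg0 (fun S eS => inv_cvg0 (dense S eS)).
have x_gt0 := eventually_all_gt0 dense.
set B := (h.+1 ^ h * (2 ^ h * h`!))%:R / eta.
apply: (@squeeze_cvgr _ _ _ _ (fun=> 0) (fun n => M n * B)); last 2 first.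
- exact: cvg_cst.
- by rewrite -(mul0r B); apply: cvgM => //; apply: cvg_cst.
apply: filterS (filterI x_gt0 (nbhs_infty_ge (2 * h).+1)) => n [xn_gt0 n_gt].
rewrite sumr_ge0 /=; last by move=> E _; apply: weight_ge0.
have M_ge0 : 0 <= M n by apply: sumr_ge0 => S eS; rewrite invr_ge0 ltW ?xn_gt0.
apply: no_copy_prob_binomial (cardC n) _ => // S eS.
exact: le1_mul_sum_inv xn_gt0 eS.
Qed.
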